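(* Let $A$ be a countable set. Then it is possible to assign to each $a\subseteq A$ sequences $y_a\in\ell^2$ and $w_a\in\{1,2\}^\omega$ such that (1) for all $a,b\subseteq A$, $y_a\in\mathsf{HC}(w_b)$ if and only if $b\not\subseteq a$; and (2) the maps $a\mapsto y_a$ and $a\mapsto w_a$ are homeomorphisms between $2^A$ and their ranges (with $\ell^2$ carrying its norm topology and $\{1,2\}^\omega$ the product topology).
   Context: $\omega=\{0,1,2,\dots\}$. Subsets of $A$ are identified with their characteristic functions in $2^A$, which carries the product of discrete topologies. $\ell^2$ is the Hilbert space of square-summable real sequences indexed by $\omega$. For $w\in\{1,2\}^\omega$, $B_w:\ell^2\to\ell^2$ is $B_w(x)(i)=w(i)\,x(i+1)$, and $\mathsf{HC}(w)$ is the set of $x\in\ell^2$ such that $\{B_w^k(x):k\in\omega\}$ is dense in $\ell^2$. *)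

From Stdlib Require Import Reals List.
From Coquelicot Require Import Coquelicot.
Open Scope R_scope.

Definition in_l2 (x : nat -> R) : Prop := ex_series (fun i => (x i) ^ 2).

Definition l2dist (x y : nat -> R) : R :=
  sqrt (Series (fun i => (x i - y i) ^ 2)).

Definition is_weight (w : nat -> R) : Prop := forall i, w i = 1 \/ w i = 2.

Definition Bw (w : nat -> R) (x : nat -> R) : nat -> R :=
  fun i => w i * x (S i).

Fixpoint Bw_iter (w : nat -> R) (k : nat) (x : nat -> R) : nat -> R :=
  match k with
  | O => x
  | S k' => Bw w (Bw_iter w k' x)
  end.

Definition HC (w : nat -> R) (x : nat -> R) : Prop :=
  in_l2 x /\
  forall z, in_l2 z -> forall eps, 0 < eps ->
    exists k, l2dist (Bw_iter w k x) z < eps.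

Definition countable_type (A : Type) : Prop :=
  exists f : A -> nat, forall u v, f u = f v -> u = v.

Definition subset_of {A : Type} (b a : A -> bool) : Prop :=
  forall u, b u = true -> a u = true.

(* b agrees with a on the finite set F: basic product-topology neighbourhood *)
Definition agree_on {A : Type} (F : list A) (a b : A -> bool) : Prop :=
  forall u, In u F -> b u = a u.

Definition homeo_onto_range_l2 {A : Type} (y : (A -> bool) -> nat -> R) : Prop :=
  (forall a b, y a = y b -> a = b) /\
  (* continuity of a |-> y_a *)
  (forall a eps, 0 < eps ->
     exists F : list A, forall b, agree_on F a b -> l2dist (y b) (y a) < eps) /\
  (* continuity of the inverse y_a |-> a on the range (each coordinate) *)
  (forall a (u : A), exists delta, 0 < delta /\
     forall b, l2dist (y b) (y a) < delta -> b u = a u).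

Definition homeo_onto_range_w {A : Type} (w : (A -> bool) -> nat -> R) : Prop :=
  (forall a b, w a = w b -> a = b) /\
  (* continuity of a |-> w_a : each coordinate locally constant *)
  (forall a (i : nat),
     exists F : list A, forall b, agree_on F a b -> w b i = w a i) /\
  (* continuity of the inverse on the range *)
  (forall a (u : A), exists N : nat,
     forall b, (forall i, (i < N)%nat -> w b i = w a i) -> b u = a u).

From Stdlib Require Import Reals List.
From Coquelicot Require Import Coquelicot.
From Stdlib Require Import Lia Lra ZArith Cantor.
From Stdlib Require Import Classical ClassicalEpsilon FunctionalExtensionality.
Open Scope R_scope.

(* Via an injection A -> nat it suffices to treat A = nat. Cut nat into consecutive
   blocks; block s is labelled by a coordinate n_s and a finite list of dyadic numbers,
   every label recurring in arbitrarily late blocks. The weight w_b is 2 except on a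
   run of r_s ones, at the start of block s when n_s is not in b and at its end when
   n_s is in b, so the products W_b(m) = w_b(0)...w_b(m-1) at block boundaries do not
   depend on b. The vector y_a vanishes on the blocks with n_s in a; on a window inside
   every other block it carries the data of the label divided by the weight product
   W_b of the case n_s in b.
   If n is in b but not in a, the blocks labelled n give iterates B_w^k y_a that start
   with arbitrary prescribed dyadic data and have a small tail, so y_a is hypercyclic.
   If b is contained in a, every nonzero entry y_a(k) lies in a block with n_s not in
   b, hence after the run of ones of its block, and r_s exceeds the size of the data,
   so |W_b(k) y_a(k)| <= 1/2; as (B_w^k y_a)(0) = W_b(k) y_a(k), the orbit stays away
   from the first unit vector.
   Finally y_a(x)^2 <= 2^-x makes a |-> y_a continuous, and a single window (resp. a
   single run of weights) recovers each coordinate of a. *)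

Lemma Series_nonneg (a : nat -> R) :
  (forall n, 0 <= a n) -> ex_series a -> 0 <= Series a.
Proof.
  intros Ha Hex.
  assert (H : Series (fun n => 0 * a n) <= Series a)
    by (apply Series_le; auto; intro n; specialize (Ha n); lra).
  rewrite Series_scal_l in H; lra.
Qed.

Lemma Series_term_le (a : nat -> R) (k : nat) :
  (forall n, 0 <= a n) -> ex_series a -> a k <= Series a.
Proof.
  intros Ha Hex.
  rewrite (Series_incr_n a (S k)) by (auto; lia); simpl Init.Nat.pred.
  assert (0 <= Series (fun j => a (S k + j)%nat)).
  { apply Series_nonneg; [auto|]. now apply (ex_series_incr_n a (S k)). }
  assert (a k <= sum_f_R0 a k).
  { destruct k as [|k]; simpl; [lra|]. pose proof (cond_pos_sum a k Ha); lra. }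
  lra.
Qed.

Lemma ex_series_of_le (a b : nat -> R) :
  (forall n, 0 <= a n <= b n) -> ex_series b -> ex_series a.
Proof.
  intros Hab Hb; apply (ex_series_le a b); auto.
  intro n; rewrite Rabs_pos_eq by apply Hab; apply Hab.
Qed.

Lemma Series_tail_lt (a : nat -> R) (eps : R) :
  (forall n, 0 <= a n) -> ex_series a -> 0 < eps ->
  exists N, Series (fun k => a (S N + k)%nat) < eps.
Proof.
  intros Ha Hex Heps.
  assert (Hl : is_lim_seq (sum_n a) (Series a)) by exact (Series_correct a Hex).
  apply is_lim_seq_spec in Hl; destruct (Hl (mkposreal eps Heps)) as [N HN].
  exists N; specialize (HN N (le_n N)); simpl in HN.
  rewrite sum_n_Reals, (Series_incr_n a (S N)) in HN by (auto; lia).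
  simpl Init.Nat.pred in HN; apply Rabs_lt_between in HN; lra.
Qed.

Lemma half_pow_bounds (k : nat) : 0 < (/2) ^ k <= 1.
Proof. induction k; simpl; lra. Qed.

Lemma half_pow_le (m n : nat) : (m <= n)%nat -> (/2) ^ n <= (/2) ^ m.
Proof.
  intros Hmn; replace n with (m + (n - m))%nat by lia; rewrite pow_add.
  pose proof (half_pow_bounds m); pose proof (half_pow_bounds (n - m)); nra.
Qed.

Lemma two_pow_mul_half_pow (m n : nat) :
  (m <= n)%nat -> 2 ^ m * (/2) ^ n = (/2) ^ (n - m).
Proof.
  intros Hmn; replace n with (m + (n - m))%nat at 1 by lia.
  rewrite pow_add, <- Rmult_assoc, <- Rpow_mult_distr.
  replace (2 * /2) with 1 by field; rewrite pow1; ring.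
Qed.

Lemma INR_le_two_pow (n : nat) : INR n <= 2 ^ n.
Proof.
  induction n as [|n IH]; [simpl; lra|].
  rewrite S_INR; simpl; pose proof (pow_R1_Rle 2 n ltac:(lra)); lra.
Qed.

Lemma is_series_half_pow (c : R) : is_series (fun n => c * (/2) ^ n) (2 * c).
Proof.
  assert (Hq : Rabs (/2) < 1) by (rewrite Rabs_pos_eq; lra).
  replace (2 * c) with (c * / (1 - /2)) by field.
  exact (is_series_scal_l c _ _ (is_series_geom (/2) Hq)).
Qed.

Lemma ex_series_half_pow (c : R) : ex_series (fun n => c * (/2) ^ n).
Proof. eexists; apply is_series_half_pow. Qed.

Lemma Series_half_pow (c : R) : Series (fun n => c * (/2) ^ n) = 2 * c.
Proof. apply is_series_unique, is_series_half_pow. Qed.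

Lemma sqr_le_half_pow (u : R) (m k t : nat) :
  Rabs u <= 2 ^ m * (/2) ^ k -> (t <= 2 * (k - m))%nat -> (m <= k)%nat ->
  u ^ 2 <= (/2) ^ t.
Proof.
  intros Hu Ht Hmk; rewrite two_pow_mul_half_pow in Hu by exact Hmk.
  rewrite <- pow2_abs; pose proof (Rabs_pos u).
  apply Rle_trans with (((/2) ^ (k - m)) ^ 2); [nra|].
  rewrite <- pow_mult; apply half_pow_le; lia.
Qed.

Lemma in_l2_of_le_half_pow (x : nat -> R) (c : R) :
  (forall i, x i ^ 2 <= c * (/2) ^ i) -> in_l2 x.
Proof.
  intros Hx; apply (ex_series_of_le _ _ (fun i => conj (pow2_ge_0 (x i)) (Hx i))).
  apply ex_series_half_pow.
Qed.

Lemma sqr_sub_le (u v : R) : (u - v) ^ 2 <= 2 * u ^ 2 + 2 * v ^ 2.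
Proof. pose proof (pow2_ge_0 (u + v)); nra. Qed.

Lemma ex_series_sqr_sub (u v : nat -> R) :
  in_l2 u -> in_l2 v -> ex_series (fun i => (u i - v i) ^ 2).
Proof.
  intros Hu Hv; apply (ex_series_of_le _ (fun i => 2 * u i ^ 2 + 2 * v i ^ 2)).
  - intro n; split; [apply pow2_ge_0 | apply sqr_sub_le].
  - apply (ex_series_plus (fun i => 2 * u i ^ 2) (fun i => 2 * v i ^ 2));
      [apply (ex_series_scal_l 2 (fun i => u i ^ 2))
      | apply (ex_series_scal_l 2 (fun i => v i ^ 2))];
      assumption.
Qed.

Lemma l2dist_coord_le (u v : nat -> R) (k : nat) :
  in_l2 u -> in_l2 v -> Rabs (u k - v k) <= l2dist u v.
Proof.
  intros Hu Hv; unfold l2dist.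
  rewrite <- sqrt_Rsqr_abs; apply sqrt_le_1_alt; unfold Rsqr.
  replace ((u k - v k) * (u k - v k)) with ((u k - v k) ^ 2) by ring.
  apply (Series_term_le (fun i => (u i - v i) ^ 2)); [intro; apply pow2_ge_0|].
  now apply ex_series_sqr_sub.
Qed.

Lemma l2dist_refl (u : nat -> R) : l2dist u u = 0.
Proof.
  unfold l2dist; rewrite (Series_ext _ (fun i => 0 * (/2) ^ i)) by (intro; ring).
  rewrite Series_half_pow, Rmult_0_r; apply sqrt_0.
Qed.

Lemma l2dist_lt (u v : nat -> R) (eps : R) :
  0 < eps -> ex_series (fun i => (u i - v i) ^ 2) ->
  Series (fun i => (u i - v i) ^ 2) < eps ^ 2 -> l2dist u v < eps.
Proof.
  intros Heps Hex Hlt; unfold l2dist.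
  rewrite <- (sqrt_pow2 eps) by lra; apply sqrt_lt_1_alt; split; auto.
  apply Series_nonneg; auto; intro; apply pow2_ge_0.
Qed.

Lemma l2dist_lt_of_head_tail (u z : nat -> R) (N : nat) (d c eps : R) :
  in_l2 z -> 0 < eps ->
  (forall i, (i <= N)%nat -> Rabs (u i - z i) <= d) ->
  (forall i, (N < i)%nat -> u i ^ 2 <= c * (/2) ^ i) ->
  INR (S N) * d ^ 2 + 2 * Series (fun k => z (S N + k)%nat ^ 2) + 4 * c < eps ^ 2 ->
  l2dist u z < eps.
Proof.
  intros Hz Heps Hhead Htail Hsum.
  set (head := fun i => if (i <=? N)%nat then d ^ 2 else 2 * z i ^ 2).
  set (tail := fun i => 2 * c * (/2) ^ i).
  assert (Hc : 0 <= c).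
  { pose proof (Htail (S N) (Nat.lt_succ_diag_r N)); pose proof (half_pow_bounds (S N)).
    pose proof (pow2_ge_0 (u (S N))); nra. }
  assert (Hdom : forall i, 0 <= (u i - z i) ^ 2 <= head i + tail i).
  { intro i; split; [apply pow2_ge_0|]; unfold head, tail.
    pose proof (half_pow_bounds i).
    destruct (Nat.leb_spec i N) as [Hi | Hi].
    - rewrite <- pow2_abs; pose proof (Hhead i Hi); pose proof (Rabs_pos (u i - z i)); nra.
    - pose proof (sqr_sub_le (u i) (z i)); pose proof (Htail i Hi); nra. }
  assert (Hhead_tail : forall k, head (S N + k)%nat = 2 * z (S N + k)%nat ^ 2).
  { intro k; unfold head; destruct (Nat.leb_spec (S N + k) N); [lia | reflexivity]. }
  assert (Ehead : ex_series head).
  { apply (ex_series_incr_n head (S N)), (ex_series_ext _ _ (fun k => eq_sym (Hhead_tail k))).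
    apply (ex_series_scal_l 2 (fun k => z (S N + k)%nat ^ 2)).
    now apply (ex_series_incr_n (fun i => z i ^ 2) (S N)). }
  assert (Esum : ex_series (fun i => head i + tail i))
    by (apply (ex_series_plus head tail); [exact Ehead | apply ex_series_half_pow]).
  apply l2dist_lt; [exact Heps | exact (ex_series_of_le _ _ Hdom Esum)|].
  apply Rle_lt_trans with (Series (fun i => head i + tail i)); [now apply Series_le|].
  rewrite Series_plus by (auto; apply ex_series_half_pow); unfold tail; rewrite Series_half_pow.
  rewrite (Series_incr_n head (S N)), (Series_ext _ _ Hhead_tail), Series_scal_l by (auto; lia).
  simpl Init.Nat.pred; rewrite (sum_eq _ (fun _ => d ^ 2)), sum_cte.
  - lra.
  - intros i Hi; unfold head; destruct (Nat.leb_spec i N); [reflexivity | lia].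
Qed.

Fixpoint wprod (w : nat -> R) (i k : nat) : R :=
  match k with O => 1 | S k' => w i * wprod w (S i) k' end.

Lemma Bw_iter_apply (w x : nat -> R) (k i : nat) :
  Bw_iter w k x i = wprod w i k * x (i + k)%nat.
Proof.
  revert i; induction k as [|k IH]; intros i; simpl.
  - rewrite Nat.add_0_r; ring.
  - unfold Bw; rewrite IH; replace (i + S k)%nat with (S i + k)%nat by lia; ring.
Qed.

Lemma wprod_add (w : nat -> R) (i k l : nat) :
  wprod w i (k + l) = wprod w i k * wprod w (i + k) l.
Proof.
  revert i; induction k as [|k IH]; intros i; simpl.
  - rewrite Nat.add_0_r; ring.
  - rewrite IH; replace (i + S k)%nat with (S i + k)%nat by lia; ring.
Qed.

Lemma wprod_succ_r (w : nat -> R) (i k : nat) :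
  wprod w i (S k) = wprod w i k * w (i + k)%nat.
Proof. replace (S k) with (k + 1)%nat by lia; rewrite wprod_add; simpl; ring. Qed.

Lemma wprod_bounds (w : nat -> R) (i k : nat) :
  is_weight w -> 1 <= wprod w i k <= 2 ^ k.
Proof.
  intros Hw; revert i; induction k as [|k IH]; intros i; simpl; [lra|].
  specialize (IH (S i)); destruct (Hw i) as [-> | ->]; lra.
Qed.

Lemma Bw_iter_in_l2 (w x : nat -> R) (k : nat) :
  is_weight w -> (forall i, x i ^ 2 <= (/2) ^ i) -> in_l2 (Bw_iter w k x).
Proof.
  intros Hw Hx; apply (in_l2_of_le_half_pow _ ((2 ^ k) ^ 2)); intro i.
  rewrite Bw_iter_apply, Rpow_mult_distr.
  destruct (wprod_bounds w i k Hw) as [W1 W2].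
  pose proof (Hx (i + k)%nat) as Hxi; rewrite pow_add in Hxi.
  pose proof (half_pow_bounds i); pose proof (half_pow_bounds k).
  assert (wprod w i k ^ 2 <= (2 ^ k) ^ 2) by nra.
  assert (x (i + k)%nat ^ 2 <= (/2) ^ i) by nra.
  pose proof (pow2_ge_0 (x (i + k)%nat)); nra.
Qed.

(** * Coding finite dyadic data *)

Definition int_of_code (c : nat) : R :=
  let (sg, m) := Cantor.of_nat c in if (sg =? 0)%nat then INR m else - INR m.

Lemma int_of_code_to_nat (sg m : nat) :
  int_of_code (Cantor.to_nat (sg, m)) = if (sg =? 0)%nat then INR m else - INR m.
Proof. unfold int_of_code; now rewrite cancel_of_to. Qed.

Lemma int_of_code_abs_le (c : nat) : Rabs (int_of_code c) <= INR c.
Proof.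
  rewrite <- (cancel_to_of c) at 2; destruct (Cantor.of_nat c) as [sg m] eqn:E.
  rewrite <- (cancel_to_of c), E, int_of_code_to_nat.
  assert (INR m <= INR (Cantor.to_nat (sg, m)))
    by (apply le_INR; pose proof (to_nat_non_decreasing sg m); lia).
  pose proof (pos_INR m).
  destruct (sg =? 0)%nat; [rewrite Rabs_pos_eq | rewrite Rabs_Ropp, Rabs_pos_eq]; lra.
Qed.

Lemma int_of_code_approx (r : R) : exists c, Rabs (int_of_code c - r) <= 1.
Proof.
  destruct (archimed (Rabs r)) as [H1 H2].
  assert (Hup : (0 <= up (Rabs r))%Z) by (apply le_IZR; pose proof (Rabs_pos r); lra).
  set (m := Z.to_nat (up (Rabs r))).
  assert (Hm : INR m = IZR (up (Rabs r))) by (unfold m; rewrite INR_IZR_INZ, Z2Nat.id; auto).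
  destruct (Rle_dec 0 r) as [Hr | Hr].
  - exists (Cantor.to_nat (0%nat, m)); rewrite int_of_code_to_nat; simpl.
    rewrite Rabs_pos_eq in H1, H2, Hm by lra; rewrite Rabs_pos_eq; lra.
  - exists (Cantor.to_nat (1%nat, m)); rewrite int_of_code_to_nat; simpl.
    rewrite Rabs_left in H1, H2, Hm by lra; rewrite Rabs_left1; lra.
Qed.

Definition dyadic (c : nat) : R :=
  let (k, e) := Cantor.of_nat c in int_of_code k / 2 ^ e.

Lemma dyadic_to_nat (k e : nat) :
  dyadic (Cantor.to_nat (k, e)) = int_of_code k / 2 ^ e.
Proof. unfold dyadic; now rewrite cancel_of_to. Qed.

Lemma dyadic_abs_le (c : nat) : Rabs (dyadic c) <= INR c.
Proof.
  rewrite <- (cancel_to_of c); destruct (Cantor.of_nat c) as [k e].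
  rewrite dyadic_to_nat; unfold Rdiv; rewrite Rabs_mult, <- pow_inv.
  rewrite (Rabs_pos_eq ((/2) ^ e)) by (left; apply half_pow_bounds).
  pose proof (int_of_code_abs_le k); pose proof (Rabs_pos (int_of_code k)).
  pose proof (half_pow_bounds e).
  assert (INR k <= INR (Cantor.to_nat (k, e)))
    by (apply le_INR; pose proof (to_nat_non_decreasing k e); lia).
  nra.
Qed.

Lemma dyadic_approx (r : R) (e : nat) : exists c, Rabs (dyadic c - r) <= (/2) ^ e.
Proof.
  destruct (int_of_code_approx (r * 2 ^ e)) as [k Hk].
  exists (Cantor.to_nat (k, e)); rewrite dyadic_to_nat.
  assert (He : 0 < 2 ^ e) by (apply pow_lt; lra).
  replace (int_of_code k / 2 ^ e - r) with ((int_of_code k - r * 2 ^ e) * (/2) ^ e)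
    by (rewrite pow_inv; field; lra).
  rewrite Rabs_mult, (Rabs_pos_eq ((/2) ^ e)) by (left; apply half_pow_bounds).
  pose proof (half_pow_bounds e); nra.
Qed.

Lemma dyadic_one : dyadic (Cantor.to_nat (Cantor.to_nat (0%nat, 1%nat), 0%nat)) = 1.
Proof. rewrite dyadic_to_nat, int_of_code_to_nat; simpl; field. Qed.

Lemma dyadic_list_approx (r : nat -> R) (e L : nat) :
  exists l, length l = L /\
            forall i, (i < L)%nat -> Rabs (dyadic (nth i l 0%nat) - r i) <= (/2) ^ e.
Proof.
  induction L as [|L (l & Hl & Hr)]; [exists nil; split; [reflexivity | intros; lia]|].
  destruct (dyadic_approx (r L) e) as [c Hc].
  exists (l ++ c :: nil); split; [rewrite length_app, Hl; simpl; lia|].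
  intros i Hi; destruct (Nat.lt_ge_cases i L) as [HiL | HiL].
  - rewrite app_nth1 by lia; auto.
  - replace i with L by lia; rewrite app_nth2, Hl, Nat.sub_diag by lia; exact Hc.
Qed.

Fixpoint code_of_list (l : list nat) : nat :=
  match l with
  | nil => O
  | h :: t => S (Cantor.to_nat (h, code_of_list t))
  end.

Fixpoint list_of_code_fuel (fuel c : nat) : list nat :=
  match fuel, c with
  | S fuel', S c' => let (h, t) := Cantor.of_nat c' in h :: list_of_code_fuel fuel' t
  | _, _ => nil
  end.

Definition list_of_code (c : nat) : list nat := list_of_code_fuel c c.

Lemma list_of_code_fuel_of_list (fuel : nat) (l : list nat) :
  (code_of_list l <= fuel)%nat -> list_of_code_fuel fuel (code_of_list l) = l.
Proof.
  revert fuel; induction l as [|h t IH]; intros [|fuel] Hfuel;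
    cbn [code_of_list list_of_code_fuel] in *; try lia; try reflexivity.
  rewrite cancel_of_to; f_equal; apply IH.
  pose proof (to_nat_non_decreasing h (code_of_list t)); lia.
Qed.

Lemma list_of_code_of_list (l : list nat) : list_of_code (code_of_list l) = l.
Proof. apply list_of_code_fuel_of_list, le_n. Qed.

Definition stage_coord (s : nat) : nat := fst (Cantor.of_nat (fst (Cantor.of_nat s))).
Definition stage_data (s : nat) : list nat :=
  list_of_code (snd (Cantor.of_nat (fst (Cantor.of_nat s)))).

Lemma stage_exists (n : nat) (l : list nat) (s0 : nat) :
  exists s, (s0 <= s)%nat /\ stage_coord s = n /\ stage_data s = l.
Proof.
  exists (Cantor.to_nat (Cantor.to_nat (n, code_of_list l), s0)).
  unfold stage_coord, stage_data; rewrite !cancel_of_to; cbn [fst snd].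
  rewrite !cancel_of_to; cbn [fst snd]; rewrite list_of_code_of_list.
  split; [|auto]. pose proof (to_nat_non_decreasing (Cantor.to_nat (n, code_of_list l)) s0); lia.
Qed.

Definition width (s : nat) : nat := length (stage_data s).
Definition height (s : nat) : nat := list_sum (stage_data s).
Definition run (s : nat) : nat := S (height s).
Definition datum (s j : nat) : R := dyadic (nth j (stage_data s) 0%nat).

Lemma nth_le_list_sum (l : list nat) (j : nat) : (nth j l 0 <= list_sum l)%nat.
Proof.
  revert j; induction l as [|h t IH]; intros [|j]; simpl; try lia.
  specialize (IH j); lia.
Qed.

Lemma datum_abs_le (s j : nat) : Rabs (datum s j) <= INR (height s).
Proof.
  eapply Rle_trans; [apply dyadic_abs_le|].
  apply le_INR, nth_le_list_sum.
Qed.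

(** * Layout of the blocks *)

(* Block [s] starts at [block_start s] and consists of [run s] slots, [gap s] slots,
   the window of [width s] slots, and again [run s] slots; [ones_before s] counts the
   weights equal to 1 in the earlier blocks. The gap is large enough for the entries of
   [yseq] to decay like 2^(-x/2) and to separate the window from everything before it. *)
Fixpoint ones_before (s : nat) : nat :=
  match s with O => O | S t => ones_before t + run t end.

Fixpoint block_start (s : nat) : nat :=
  match s with
  | O => O
  | S t => let p := block_start t in
           p + (2 * run t + 2 * (p + ones_before t + run t + height t) + width t)
  end.

Definition gap (s : nat) : nat := 2 * (block_start s + ones_before s + run s + height s).
Definition block_len (s : nat) : nat := 2 * run s + gap s + width s.
Definition window (s : nat) : nat := block_start s + run s + gap s.

Lemma block_start_S (s : nat) : block_start (S s) = (block_start s + block_len s)%nat.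
Proof. reflexivity. Qed.

Lemma ones_before_le_block_start (s : nat) : (ones_before s <= block_start s)%nat.
Proof. induction s as [|s IH]; cbn [ones_before block_start]; lia. Qed.

Lemma block_start_lt_S (s : nat) : (block_start s < block_start (S s))%nat.
Proof. rewrite block_start_S; unfold block_len, run; lia. Qed.

Lemma block_start_le (s s' : nat) : (s <= s')%nat -> (block_start s <= block_start s')%nat.
Proof.
  induction 1 as [|s' _ IH]; [lia|]. pose proof (block_start_lt_S s'); lia.
Qed.

Lemma le_block_start (s : nat) : (s <= block_start s)%nat.
Proof. induction s as [|s IH]; [lia|]. pose proof (block_start_lt_S s); lia. Qed.

Fixpoint block_of (x : nat) : nat :=
  match x with
  | O => O
  | S x' => let s := block_of x' in if (S x' =? block_start (S s))%nat then S s else s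
  end.

Definition block_offset (x : nat) : nat := (x - block_start (block_of x))%nat.

Lemma block_of_spec (x : nat) :
  (block_start (block_of x) <= x < block_start (S (block_of x)))%nat.
Proof.
  induction x as [|x IH]; [exact (conj (le_n 0) (block_start_lt_S 0))|].
  cbn [block_of]; destruct (Nat.eqb_spec (S x) (block_start (S (block_of x)))) as [E | E].
  - pose proof (block_start_lt_S (S (block_of x))); lia.
  - lia.
Qed.

Lemma block_of_unique (x s : nat) :
  (block_start s <= x < block_start (S s))%nat -> block_of x = s.
Proof.
  intros Hx; pose proof (block_of_spec x).
  destruct (Nat.lt_total (block_of x) s) as [L | [E | L]]; auto.
  - pose proof (block_start_le _ _ L); lia.
  - pose proof (block_start_le _ _ L); lia.
Qed.

Lemma block_of_block_start_add (s k : nat) :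
  (k < block_len s)%nat -> block_of (block_start s + k) = s /\ block_offset (block_start s + k) = k.
Proof.
  intros Hk.
  assert (E : block_of (block_start s + k) = s)
    by (apply block_of_unique; rewrite block_start_S; lia).
  split; [exact E|]. unfold block_offset; rewrite E; lia.
Qed.

Definition block_weight (s : nat) (inb : bool) (k : nat) : R :=
  if (k <? run s)%nat then (if inb then 2 else 1)
  else if (k <? run s + gap s + width s)%nat then 2
  else if inb then 1 else 2.

Definition wseq (b : nat -> bool) (x : nat) : R :=
  block_weight (block_of x) (b (stage_coord (block_of x))) (block_offset x).

Definition yseq (a : nat -> bool) (x : nat) : R :=
  let s := block_of x in
  if ((window s <=? x) && (x <? window s + width s) && negb (a (stage_coord s)))%bool
  then datum s (x - window s) * (/2) ^ (x - ones_before s)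
  else 0.

Lemma wseq_is_weight (b : nat -> bool) : is_weight (wseq b).
Proof.
  intro x; unfold wseq, block_weight.
  destruct (_ <? _)%nat; [destruct (b _); auto|].
  destruct (_ <? _)%nat; [auto | destruct (b _); auto].
Qed.

Lemma wseq_block (b : nat -> bool) (s k : nat) :
  (k < block_len s)%nat ->
  wseq b (block_start s + k) = block_weight s (b (stage_coord s)) k.
Proof.
  intros Hk; destruct (block_of_block_start_add s k Hk) as [E1 E2].
  unfold wseq; now rewrite E1, E2.
Qed.

Lemma wseq_ext (a b : nat -> bool) (x : nat) :
  b (stage_coord (block_of x)) = a (stage_coord (block_of x)) -> wseq b x = wseq a x.
Proof. intros H; unfold wseq; now rewrite H. Qed.

Lemma yseq_ext (a b : nat -> bool) (x : nat) :
  b (stage_coord (block_of x)) = a (stage_coord (block_of x)) -> yseq b x = yseq a x.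
Proof. intros H; unfold yseq; now rewrite H. Qed.

Definition block_ones (s : nat) (inb : bool) (k : nat) : nat :=
  if inb then (k - (run s + gap s + width s))%nat else Nat.min k (run s).

Lemma block_weight_step (s : nat) (inb : bool) (k : nat) : (k < block_len s)%nat ->
  (block_weight s inb k = 2 /\ (S k - block_ones s inb (S k) = S (k - block_ones s inb k))%nat) \/
  (block_weight s inb k = 1 /\ (S k - block_ones s inb (S k) = k - block_ones s inb k)%nat).
Proof.
  unfold block_len, block_weight, block_ones; intros Hk.
  destruct inb; destruct (Nat.ltb_spec k (run s));
    destruct (Nat.ltb_spec k (run s + gap s + width s)); try lia;
    (left + right); split; auto; lia.
Qed.

Lemma wprod_wseq_block (b : nat -> bool) (s o : nat) : (o <= block_len s)%nat ->
  wprod (wseq b) 0 (block_start s + o)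
  = wprod (wseq b) 0 (block_start s) * 2 ^ (o - block_ones s (b (stage_coord s)) o).
Proof.
  induction o as [|o IH]; intros Ho.
  - rewrite Nat.add_0_r; unfold block_ones; destruct (b _); simpl; ring.
  - rewrite Nat.add_succ_r, wprod_succ_r, IH, Nat.add_0_l, wseq_block by lia.
    destruct (block_weight_step s (b (stage_coord s)) o) as [[-> ->] | [-> ->]]; [lia | |];
      simpl; ring.
Qed.

Lemma wprod_wseq_block_start (b : nat -> bool) (s : nat) :
  wprod (wseq b) 0 (block_start s) = 2 ^ (block_start s - ones_before s).
Proof.
  induction s as [|s IH]; [reflexivity|].
  rewrite block_start_S at 1; rewrite wprod_wseq_block, IH, <- pow_add by lia.
  assert (E : block_ones s (b (stage_coord s)) (block_len s) = run s)
    by (unfold block_ones, block_len; destruct (b _); lia).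
  rewrite E; f_equal; rewrite block_start_S; cbn [ones_before].
  pose proof (ones_before_le_block_start s); unfold block_len; lia.
Qed.

Lemma wprod_wseq_window (b : nat -> bool) (s j : nat) : (j <= width s)%nat ->
  wprod (wseq b) 0 (window s + j)
  = 2 ^ (window s + j - ones_before s - (if b (stage_coord s) then 0 else run s)).
Proof.
  intros Hj; unfold window.
  replace (block_start s + run s + gap s + j)%nat
    with (block_start s + (run s + gap s + j))%nat by lia.
  rewrite wprod_wseq_block by (unfold block_len; lia).
  rewrite wprod_wseq_block_start, <- pow_add; f_equal.
  pose proof (ones_before_le_block_start s); unfold block_ones; destruct (b _); lia.
Qed.

Lemma wprod_wseq_lower (b : nat -> bool) (s m : nat) : (m <= block_start s)%nat ->
  2 ^ m <= wprod (wseq b) 0 m * 2 ^ ones_before s.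
Proof.
  intros Hm; set (d := (block_start s - m)%nat).
  assert (E := wprod_add (wseq b) 0 m d).
  replace (m + d)%nat with (block_start s) in E by (unfold d; lia).
  rewrite wprod_wseq_block_start in E.
  destruct (wprod_bounds (wseq b) m d (wseq_is_weight b)) as [_ Hd].
  destruct (wprod_bounds (wseq b) 0 m (wseq_is_weight b)) as [Hm0 _].
  assert (Hpow : 2 ^ (block_start s - ones_before s) * 2 ^ ones_before s = 2 ^ m * 2 ^ d).
  { rewrite <- !pow_add; f_equal; pose proof (ones_before_le_block_start s); unfold d; lia. }
  assert (0 < 2 ^ ones_before s) by (apply pow_lt; lra).
  apply (Rmult_le_reg_r (2 ^ d)); [apply pow_lt; lra|].
  rewrite <- Hpow, E, Nat.add_0_l.
  replace (wprod (wseq b) 0 m * 2 ^ ones_before s * 2 ^ d)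
    with (wprod (wseq b) 0 m * 2 ^ d * 2 ^ ones_before s) by ring.
  apply Rmult_le_compat_r; [lra|]; apply Rmult_le_compat_l; lra.
Qed.

Lemma yseq_window (a : nat -> bool) (s j : nat) : (j < width s)%nat ->
  yseq a (window s + j)
  = if a (stage_coord s) then 0 else datum s j * (/2) ^ (window s + j - ones_before s).
Proof.
  intros Hj.
  assert (E : block_of (window s + j) = s).
  { unfold window; replace (block_start s + run s + gap s + j)%nat
      with (block_start s + (run s + gap s + j))%nat by lia.
    apply block_of_block_start_add; unfold block_len; lia. }
  unfold yseq; rewrite E.
  replace (window s <=? window s + j)%nat with true by (symmetry; apply Nat.leb_le; lia).
  replace (window s + j <? window s + width s)%nat with true by (symmetry; apply Nat.ltb_lt; lia).
  replace (window s + j - window s)%nat with j by lia.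
  now destruct (a (stage_coord s)).
Qed.

Lemma yseq_support (a : nat -> bool) (x : nat) : yseq a x <> 0 ->
  exists j, (j < width (block_of x))%nat /\ x = (window (block_of x) + j)%nat /\
            a (stage_coord (block_of x)) = false.
Proof.
  unfold yseq; intros Hx.
  destruct (Nat.leb_spec (window (block_of x)) x); cbn [andb] in Hx; [|now contradiction Hx].
  destruct (Nat.ltb_spec x (window (block_of x) + width (block_of x))); cbn [andb] in Hx;
    [|now contradiction Hx].
  destruct (a _) eqn:Ha; cbn [negb] in Hx; [now contradiction Hx|].
  exists (x - window (block_of x))%nat; repeat split; auto; lia.
Qed.

Lemma yseq_sqr_le (a : nat -> bool) (x : nat) : yseq a x ^ 2 <= (/2) ^ x.
Proof.
  destruct (Req_dec (yseq a x) 0) as [E | E].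
  { rewrite E; pose proof (half_pow_bounds x); simpl; lra. }
  destruct (yseq_support a x E) as (j & Hj & Hx & Ha); set (s := block_of x) in *.
  rewrite Hx, yseq_window, Ha by exact Hj.
  apply (sqr_le_half_pow _ (height s) (window s + j - ones_before s)).
  - rewrite Rabs_mult, (Rabs_pos_eq ((/2) ^ _)) by (left; apply half_pow_bounds).
    pose proof (datum_abs_le s j); pose proof (INR_le_two_pow (height s)).
    pose proof (half_pow_bounds (window s + j - ones_before s)); nra.
  - unfold window, gap; lia.
  - unfold window, gap; lia.
Qed.

Lemma yseq_in_l2 (a : nat -> bool) : in_l2 (yseq a).
Proof.
  apply (in_l2_of_le_half_pow _ 1); intro x; rewrite Rmult_1_l; apply yseq_sqr_le.
Qed.

Lemma wprod_mul_yseq_window (b a : nat -> bool) (s j : nat) :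
  (j < width s)%nat -> a (stage_coord s) = false ->
  wprod (wseq b) 0 (window s + j) * yseq a (window s + j)
  = datum s j * (/2) ^ (if b (stage_coord s) then 0 else run s).
Proof.
  intros Hj Ha; rewrite wprod_wseq_window, yseq_window, Ha by lia.
  set (K := (window s + j - ones_before s)%nat).
  set (r := if b (stage_coord s) then 0%nat else run s).
  assert (Hr : (r <= K)%nat) by (unfold r, K, window, gap; destruct (b _); lia).
  replace (window s + j - ones_before s - r)%nat with (K - r)%nat by reflexivity.
  rewrite Rmult_comm, Rmult_assoc, (Rmult_comm _ (2 ^ _)), two_pow_mul_half_pow by lia.
  do 2 f_equal; lia.
Qed.

Lemma wprod_mul_yseq_abs_le (b a : nat -> bool) (x : nat) :
  Rabs (wprod (wseq b) 0 x * yseq a x) <= INR (height (block_of x)).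
Proof.
  destruct (Req_dec (yseq a x) 0) as [E | E].
  { rewrite E, Rmult_0_r, Rabs_R0; apply pos_INR. }
  destruct (yseq_support a x E) as (j & Hj & Hx & Ha); set (s := block_of x) in *.
  rewrite Hx, wprod_mul_yseq_window, Rabs_mult by auto.
  rewrite (Rabs_pos_eq ((/2) ^ _)) by (left; apply half_pow_bounds).
  pose proof (datum_abs_le s j); pose proof (Rabs_pos (datum s j)).
  pose proof (half_pow_bounds (if b (stage_coord s) then 0 else run s)); nra.
Qed.

Lemma wprod_mul_yseq_le_half (b a : nat -> bool) (x : nat) : subset_of b a ->
  Rabs (wprod (wseq b) 0 x * yseq a x) <= /2.
Proof.
  intros Hba; destruct (Req_dec (yseq a x) 0) as [E | E].
  { rewrite E, Rmult_0_r, Rabs_R0; lra. }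
  destruct (yseq_support a x E) as (j & Hj & Hx & Ha); set (s := block_of x) in *.
  assert (Hb : b (stage_coord s) = false).
  { destruct (b _) eqn:Eb; [|reflexivity]. now rewrite (Hba _ Eb) in Ha. }
  rewrite Hx, wprod_mul_yseq_window, Hb, Rabs_mult by auto.
  rewrite (Rabs_pos_eq ((/2) ^ _)) by (left; apply half_pow_bounds).
  assert (E2 : 2 ^ height s * (/2) ^ run s = /2).
  { unfold run; rewrite two_pow_mul_half_pow by lia.
    now replace (S (height s) - height s)%nat with 1%nat by lia; simpl; rewrite Rmult_1_r. }
  pose proof (datum_abs_le s j); pose proof (INR_le_two_pow (height s)).
  pose proof (half_pow_bounds (run s)); pose proof (Rabs_pos (datum s j)); nra.
Qed.

(** * Hypercyclicity *)

Lemma orbit_window (b a : nat -> bool) (s i : nat) :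
  b (stage_coord s) = true -> a (stage_coord s) = false -> (i < width s)%nat ->
  Bw_iter (wseq b) (window s) (yseq a) i = datum s i / wprod (wseq b) 0 i.
Proof.
  intros Hb Ha Hi.
  destruct (wprod_bounds (wseq b) 0 i (wseq_is_weight b)) as [Hpos _].
  assert (E := wprod_mul_yseq_window b a s i Hi Ha); rewrite Hb, Rmult_1_r in E.
  rewrite <- E, Bw_iter_apply, (Nat.add_comm (window s) i), (wprod_add _ 0 i); simpl (0 + i)%nat.
  field; lra.
Qed.

Lemma orbit_window_close (b a : nat -> bool) (z : nat -> R) (s i : nat) (d : R) :
  b (stage_coord s) = true -> a (stage_coord s) = false -> (i < width s)%nat ->
  Rabs (datum s i - z i * wprod (wseq b) 0 i) <= d ->
  Rabs (Bw_iter (wseq b) (window s) (yseq a) i - z i) <= d.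
Proof.
  intros Hb Ha Hi Hd; rewrite orbit_window by auto.
  destruct (wprod_bounds (wseq b) 0 i (wseq_is_weight b)) as [Hpos _].
  replace (datum s i / wprod (wseq b) 0 i - z i)
    with ((datum s i - z i * wprod (wseq b) 0 i) / wprod (wseq b) 0 i) by (field; lra).
  unfold Rdiv; rewrite Rabs_mult, (Rabs_pos_eq (/ _)) by (left; apply Rinv_0_lt_compat; lra).
  assert (/ wprod (wseq b) 0 i <= 1) by (rewrite <- Rinv_1; apply Rinv_le_contravar; lra).
  pose proof (Rabs_pos (datum s i - z i * wprod (wseq b) 0 i));
    pose proof (Rinv_0_lt_compat _ (Rlt_le_trans _ _ _ Rlt_0_1 Hpos)); nra.
Qed.

Lemma orbit_tail_later_block (a : nat -> bool) (s i : nat) :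
  (width s <= i)%nat -> yseq a (i + window s) <> 0 -> (s < block_of (i + window s))%nat.
Proof.
  intros Hi Hx; destruct (yseq_support a _ Hx) as (j & Hj & Ex & _).
  set (s' := block_of (i + window s)) in *.
  destruct (Nat.lt_total s s') as [L | [E | L]]; [exact L| |].
  - rewrite <- E in Ex, Hj; lia.
  - pose proof (block_start_le _ _ L); pose proof (block_of_spec (i + window s)).
    fold s' in H0; unfold window in *; lia.
Qed.

Lemma orbit_tail (b a : nat -> bool) (s i : nat) : (width s <= i)%nat ->
  Bw_iter (wseq b) (window s) (yseq a) i ^ 2 <= (/2) ^ window s * (/2) ^ i.
Proof.
  intros Hi; rewrite <- pow_add, Bw_iter_apply; set (x := (i + window s)%nat).
  destruct (Req_dec (yseq a x) 0) as [E | E].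
  { rewrite E, Rmult_0_r; pose proof (half_pow_bounds (window s + i)); simpl; lra. }
  pose proof (orbit_tail_later_block a s i Hi E) as Hss; fold x in Hss.
  pose proof (block_of_spec x) as Hx; set (s' := block_of x) in *.
  set (u := wprod (wseq b) i (window s) * yseq a x).
  set (M := (height s' + ones_before (S s'))%nat).
  assert (Hu : Rabs u * 2 ^ i <= 2 ^ M).
  { assert (Hlow := wprod_wseq_lower b (S s') i ltac:(unfold x in Hx; lia)).
    assert (Hup := wprod_mul_yseq_abs_le b a x); fold s' in Hup.
    rewrite (wprod_add _ 0 i (window s)), Nat.add_0_l, Rmult_assoc, Rabs_mult in Hup.
    fold x u in Hup; rewrite (Rabs_pos_eq (wprod _ 0 i)) in Hup by
      (pose proof (wprod_bounds (wseq b) 0 i (wseq_is_weight b)); lra).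
    pose proof (INR_le_two_pow (height s')); pose proof (Rabs_pos u).
    assert (0 < 2 ^ ones_before (S s')) by (apply pow_lt; lra).
    unfold M; rewrite pow_add; nra. }
  assert (Hfar : (window s + 2 * M <= i)%nat).
  { destruct (yseq_support a x E) as (j & _ & Ex & _); fold s' in Ex.
    pose proof (block_start_le _ _ Hss) as Hstart; rewrite block_start_S in Hstart.
    unfold M, x, block_len, window, gap in *; cbn [ones_before]; lia. }
  apply (sqr_le_half_pow u M i); [|lia|lia].
  apply (Rmult_le_reg_r (2 ^ i)); [apply pow_lt; lra|].
  rewrite Rmult_assoc, (Rmult_comm (_ ^ i)), two_pow_mul_half_pow, Nat.sub_diag by lia.
  simpl; lra.
Qed.

Lemma yseq_HC (b a : nat -> bool) (n : nat) :
  b n = true -> a n = false -> HC (wseq b) (yseq a).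
Proof.
  intros Hb Ha; split; [apply yseq_in_l2|]; intros z Hz eps Heps.
  set (E := eps ^ 2); assert (HE : 0 < E) by (unfold E; nra).
  destruct (Series_tail_lt (fun i => z i ^ 2) (E / 4)) as [N HN];
    [intro; apply pow2_ge_0 | exact Hz | lra |].
  assert (HN0 : 0 < INR (S N)) by apply lt_0_INR, Nat.lt_0_succ.
  assert (Hq : Rabs (/2) < 1) by (rewrite Rabs_pos_eq; lra).
  destruct (pow_lt_1_zero _ Hq (E / (4 * INR (S N)))) as [e He];
    [apply Rdiv_lt_0_compat; lra|]; specialize (He e (le_n e)).
  destruct (pow_lt_1_zero _ Hq (E / 16)) as [s0 Hs0]; [lra|]; specialize (Hs0 s0 (le_n s0)).
  rewrite Rabs_pos_eq in He, Hs0 by (left; apply half_pow_bounds).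
  destruct (dyadic_list_approx (fun i => z i * wprod (wseq b) 0 i) e (S N)) as (l & Hl & Hr).
  destruct (stage_exists n l s0) as (s & Hs & Hn & Hdata).
  assert (Hwidth : width s = S N) by (unfold width; rewrite Hdata; exact Hl).
  exists (window s).
  apply (l2dist_lt_of_head_tail _ _ N ((/2) ^ e) ((/2) ^ window s)); [exact Hz | exact Heps | | |].
  - intros i Hi; apply orbit_window_close; [rewrite Hn; auto | rewrite Hn; auto | lia |].
    unfold datum; rewrite Hdata; apply Hr; lia.
  - intros i Hi; apply orbit_tail; lia.
  - assert ((/2) ^ window s <= (/2) ^ s0).
    { apply half_pow_le; pose proof (le_block_start s); unfold window; lia. }
    assert (INR (S N) * (/2) ^ e < E / 4).
    { apply (Rmult_lt_compat_l (INR (S N))) in He; [|exact HN0].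
      replace (INR (S N) * (E / (4 * INR (S N)))) with (E / 4) in He by (field; lra); exact He. }
    pose proof (half_pow_bounds e); fold E; nra.
Qed.

Lemma yseq_not_HC (b a : nat -> bool) : subset_of b a -> ~ HC (wseq b) (yseq a).
Proof.
  intros Hba [_ Hdense].
  set (e0 := fun i : nat => if (i =? 0)%nat then 1 else 0).
  assert (He0 : in_l2 e0).
  { apply (in_l2_of_le_half_pow _ 1); intros [|i]; unfold e0; simpl; [lra|].
    pose proof (half_pow_bounds (S i)); simpl in *; lra. }
  destruct (Hdense e0 He0 (/2)) as [k Hk]; [lra|].
  pose proof (l2dist_coord_le _ _ 0 (Bw_iter_in_l2 _ _ k (wseq_is_weight b) (yseq_sqr_le a)) He0).
  rewrite Bw_iter_apply in H; simpl (0 + k)%nat in H; change (e0 0%nat) with 1 in H.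
  pose proof (wprod_mul_yseq_le_half b a k Hba) as Hsmall.
  apply Rabs_le_between in Hsmall.
  assert (Rabs (wprod (wseq b) 0 k * yseq a k - 1) >= /2)
    by (rewrite Rabs_left1; lra).
  lra.
Qed.

Lemma yseq_HC_iff (a b : nat -> bool) : HC (wseq b) (yseq a) <-> ~ subset_of b a.
Proof.
  split; [intros H Hba; exact (yseq_not_HC b a Hba H)|].
  intros Hba; apply not_all_ex_not in Hba as [n Hn].
  apply imply_to_and in Hn as [Hb Ha]; apply (yseq_HC b a n Hb).
  now destruct (a n).
Qed.

Lemma yseq_continuous (a : nat -> bool) (eps : R) : 0 < eps ->
  exists F : list nat, forall b, agree_on F a b -> l2dist (yseq b) (yseq a) < eps.
Proof.
  intros Heps; assert (Hq : Rabs (/2) < 1) by (rewrite Rabs_pos_eq; lra).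
  destruct (pow_lt_1_zero _ Hq (eps ^ 2 / 16)) as [K HK]; [nra|]; specialize (HK K (le_n K)).
  rewrite Rabs_pos_eq in HK by (left; apply half_pow_bounds).
  exists (map stage_coord (seq 0 (S K))); intros b Hb.
  set (X := block_start (S K)); assert (HX : (S K <= X)%nat) by apply le_block_start.
  set (D := fun x => (yseq b x - yseq a x) ^ 2).
  assert (HD0 : forall x, (x < X)%nat -> D x = 0).
  { intros x Hx; unfold D; rewrite (yseq_ext a b x); [ring|].
    apply Hb, in_map, in_seq; pose proof (block_of_spec x).
    destruct (Nat.lt_ge_cases (block_of x) (S K)) as [L | L]; [lia|].
    pose proof (block_start_le _ _ L); unfold X in Hx; lia. }
  apply l2dist_lt; [exact Heps | apply ex_series_sqr_sub; apply yseq_in_l2 |]; fold D.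
  rewrite (Series_incr_n D X), sum_eq_R0, Rplus_0_l;
    [| intros x Hx; apply HD0; lia | lia | apply ex_series_sqr_sub; apply yseq_in_l2].
  apply Rle_lt_trans with (Series (fun k => (4 * (/2) ^ X) * (/2) ^ k)).
  - apply Series_le; [|apply ex_series_half_pow]; intro k; split; [apply pow2_ge_0|].
    unfold D; pose proof (sqr_sub_le (yseq b (X + k)) (yseq a (X + k))).
    pose proof (yseq_sqr_le b (X + k)); pose proof (yseq_sqr_le a (X + k)).
    rewrite pow_add in *; nra.
  - rewrite Series_half_pow; pose proof (half_pow_le K X ltac:(lia)).
    assert (0 < eps ^ 2) by nra; lra.
Qed.

Lemma yseq_coord_recover (a : nat -> bool) (n : nat) :
  exists d, 0 < d /\ forall b, l2dist (yseq b) (yseq a) < d -> b n = a n.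
Proof.
  set (one := Cantor.to_nat (Cantor.to_nat (0%nat, 1%nat), 0%nat)).
  destruct (stage_exists n (one :: nil) 0) as (s & _ & Hn & Hdata).
  assert (Hw : (0 < width s)%nat) by (unfold width; rewrite Hdata; simpl; lia).
  assert (Hd : datum s 0 = 1) by (unfold datum; rewrite Hdata; apply dyadic_one).
  set (d := (/2) ^ (window s + 0 - ones_before s)).
  exists d; split; [apply half_pow_bounds|]; intros b Hdist.
  destruct (Bool.bool_dec (b n) (a n)) as [E | E]; [exact E|]; exfalso.
  pose proof (l2dist_coord_le (yseq b) (yseq a) (window s + 0) (yseq_in_l2 b) (yseq_in_l2 a)) as Hc.
  rewrite !yseq_window, Hn, Hd, Rmult_1_l in Hc by exact Hw; fold d in Hc.
  assert (0 < d) by apply half_pow_bounds.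
  destruct (b n), (a n); try congruence.
  - rewrite Rminus_0_l, Rabs_Ropp, Rabs_pos_eq in Hc; lra.
  - rewrite Rminus_0_r, Rabs_pos_eq in Hc; lra.
Qed.

Lemma wseq_coord_recover (a : nat -> bool) (n : nat) :
  exists N, forall b, (forall i, (i < N)%nat -> wseq b i = wseq a i) -> b n = a n.
Proof.
  destruct (stage_exists n nil 0) as (s & _ & Hn & _).
  exists (S (block_start s)); intros b Hba.
  specialize (Hba (block_start s + 0)%nat ltac:(lia)).
  rewrite !wseq_block, Hn in Hba by (unfold block_len, run; lia).
  unfold block_weight in Hba.
  replace (0 <? run s)%nat with true in Hba by (symmetry; apply Nat.ltb_lt; unfold run; lia).
  destruct (b n), (a n); auto; lra.
Qed.

Definition hc_family {A : Type} (y w : (A -> bool) -> nat -> R) : Prop :=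
  (forall a, in_l2 (y a)) /\
  (forall a, is_weight (w a)) /\
  (forall a b : A -> bool, HC (w b) (y a) <-> ~ subset_of b a) /\
  homeo_onto_range_l2 y /\
  homeo_onto_range_w w.

Lemma hc_family_nat : hc_family yseq wseq.
Proof.
  split; [exact yseq_in_l2|]; split; [exact wseq_is_weight|]; split; [exact yseq_HC_iff|].
  split; [split; [|split]|split; [|split]].
  - intros a b Hab; apply functional_extensionality; intro n.
    destruct (yseq_coord_recover b n) as (d & Hd & H).
    apply H; rewrite Hab, l2dist_refl; exact Hd.
  - exact yseq_continuous.
  - intros a n; destruct (yseq_coord_recover a n) as (d & Hd & H); exists d; auto.
  - intros a b Hab; apply functional_extensionality; intro n.
    destruct (wseq_coord_recover b n) as (N & H).
    apply H; intros i _; now rewrite Hab.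
  - intros a i; exists (stage_coord (block_of i) :: nil); intros b Hb.
    apply wseq_ext, Hb; now left.
  - exact wseq_coord_recover.
Qed.

(** * From nat to a countable set *)

Definition image_of {A : Type} (f : A -> nat) (a : A -> bool) (n : nat) : bool :=
  if excluded_middle_informative (exists u, f u = n /\ a u = true) then true else false.

Section ImageOf.

Variable A : Type.
Variable f : A -> nat.
Hypothesis f_inj : forall u v, f u = f v -> u = v.

Lemma image_of_apply (a : A -> bool) (u : A) : image_of f a (f u) = a u.
Proof.
  unfold image_of; destruct (excluded_middle_informative _) as [(v & Hv & Ha) | Hn].
  - now rewrite <- (f_inj _ _ Hv).
  - destruct (a u) eqn:E; [|reflexivity]. exfalso; eauto.
Qed.

Lemma image_of_outside (a : A -> bool) (n : nat) :
  (forall u, f u <> n) -> image_of f a n = false.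
Proof.
  intros Hn; unfold image_of.
  destruct (excluded_middle_informative _) as [(v & Hv & _) | _]; [now contradiction (Hn v)|].
  reflexivity.
Qed.

Lemma image_of_inj (a b : A -> bool) : image_of f a = image_of f b -> a = b.
Proof.
  intros Hab; apply functional_extensionality; intro u.
  now rewrite <- !(image_of_apply _ u), Hab.
Qed.

Lemma subset_of_image_of (a b : A -> bool) :
  subset_of (image_of f b) (image_of f a) <-> subset_of b a.
Proof.
  split; intros H.
  - intros u Hu; rewrite <- image_of_apply; apply H; now rewrite image_of_apply.
  - intros n Hn; destruct (classic (exists u, f u = n)) as [[u <-] | Hu].
    + rewrite image_of_apply in *; auto.
    + rewrite image_of_outside in Hn; [discriminate|]; eauto.
Qed.

Lemma agree_on_image_of (F : list nat) :
  exists G : list A, forall a b, agree_on G a b -> agree_on F (image_of f a) (image_of f b).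
Proof.
  assert (HG : exists G : list A, forall u, In (f u) F -> In u G).
  { induction F as [|n F [G HG]]; [exists nil; intros u []|].
    destruct (classic (exists u, f u = n)) as [[v Hv] | Hn].
    - exists (v :: G); intros u [Hu | Hu]; [left; apply f_inj; congruence | right; auto].
    - exists G; intros u [Hu | Hu]; [exfalso; eauto | auto]. }
  destruct HG as [G HG]; exists G; intros a b Hab n Hn.
  destruct (classic (exists u, f u = n)) as [[u <-] | Hu].
  - rewrite !image_of_apply; auto.
  - rewrite !image_of_outside; eauto.
Qed.

Lemma homeo_onto_range_l2_image_of (y : (nat -> bool) -> nat -> R) :
  homeo_onto_range_l2 y -> homeo_onto_range_l2 (fun a : A -> bool => y (image_of f a)).
Proof.
  intros (Hinj & Hcont & Hinv); split; [|split].
  - intros a b Hab; exact (image_of_inj a b (Hinj _ _ Hab)).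
  - intros a eps Heps; destruct (Hcont (image_of f a) eps Heps) as [F HF].
    destruct (agree_on_image_of F) as [G HG]; exists G; auto.
  - intros a u; destruct (Hinv (image_of f a) (f u)) as (d & Hd & H).
    exists d; split; [exact Hd|]; intros b Hb.
    rewrite <- (image_of_apply a u), <- (image_of_apply b u); auto.
Qed.

Lemma homeo_onto_range_w_image_of (w : (nat -> bool) -> nat -> R) :
  homeo_onto_range_w w -> homeo_onto_range_w (fun a : A -> bool => w (image_of f a)).
Proof.
  intros (Hinj & Hcont & Hinv); split; [|split].
  - intros a b Hab; exact (image_of_inj a b (Hinj _ _ Hab)).
  - intros a i; destruct (Hcont (image_of f a) i) as [F HF].
    destruct (agree_on_image_of F) as [G HG]; exists G; auto.
  - intros a u; destruct (Hinv (image_of f a) (f u)) as [N H].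
    exists N; intros b Hb.
    rewrite <- (image_of_apply a u), <- (image_of_apply b u); auto.
Qed.

Lemma hc_family_image_of (y w : (nat -> bool) -> nat -> R) :
  hc_family y w ->
  hc_family (fun a : A -> bool => y (image_of f a)) (fun a => w (image_of f a)).
Proof.
  intros (Hy & Hw & Hhc & Hhy & Hhw); split; [auto|]; split; [auto|]; split.
  - intros a b; rewrite Hhc; now rewrite subset_of_image_of.
  - split; [apply homeo_onto_range_l2_image_of | apply homeo_onto_range_w_image_of]; auto.
Qed.

End ImageOf.

Theorem lemma7 (A : Type) (hA : countable_type A) :
  exists (y : (A -> bool) -> nat -> R) (w : (A -> bool) -> nat -> R),
    (forall a, in_l2 (y a)) /\
    (forall a, is_weight (w a)) /\
    (forall a b : A -> bool, HC (w b) (y a) <-> ~ subset_of b a) /\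
    homeo_onto_range_l2 y /\
    homeo_onto_range_w w.
Proof.
  destruct hA as [f f_inj].
  exists (fun a => yseq (image_of f a)), (fun a => wseq (image_of f a)).
  exact (hc_family_image_of A f f_inj yseq wseq hc_family_nat).
Qed.
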